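(* Let $S=s_1,\ldots,s_n$ be a sequence of positive real numbers, let $\alpha>1$, $\gamma>0$, and let $k$ be a positive integer. Let $\beta>0$ and let $L=\ell_1,\ldots,\ell_n$ be an optimal level sequence for $\textsc{Exp}(\alpha,\beta)$. Define \[ \beta'=\frac{n}{\sum_{i=1}^n s_i\alpha^{\ell_i}}. \] Let $\beta^*$ be the optimal parameter of $\textsc{Exp}(\alpha)$ (i.e., $(L^*,\beta^* )$ is an optimal solution of $\textsc{Exp}(\alpha)$ for some $L^*$). Then either $\beta^*\le\min(\beta,\beta')$ or $\beta^*\ge\max(\beta,\beta')$.
   Context: A level sequence is $L=\ell_1,\ldots,\ell_n$ of integers with $0\le\ell_i\le k$; set $\ell_0=0$. The penalty is $\mathrm{pen}(x,y)=\max(y-x,0)\,\gamma\log n$; $p_{\exp}(s;\lambda)=\lambda e^{-\lambda s}$; $\mathrm{score}_{\exp}(L,S;\alpha,\beta,\gamma)=\sum_{i=1}^n\big[-\log p_{\exp}(s_i;\beta\alpha^{\ell_i})+\mathrm{pen}(\ell_{i-1},\ell_i)\big]$. Problem $\textsc{Exp}(\alpha,\beta)$: given $S,\alpha,\beta,\gamma,k$, find a level sequence $L$ minimizing $\mathrm{score}_{\exp}(L,S;\alpha,\beta,\gamma)$. Problem $\textsc{Exp}(\alpha)$: given $S,\alpha,\gamma,k$, find a level sequence $L$ and $\beta>0$ minimizing $\mathrm{score}_{\exp}(L,S;\alpha,\beta,\gamma)$. *)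

From Stdlib Require Import Reals.
Open Scope R_scope.

Fixpoint sum1 (n : nat) (f : nat -> R) : R :=
  match n with
  | O => 0
  | S m => sum1 m f + f (S m)
  end.

(* A level sequence l_1..l_n (values of L at 1..n), with the convention l_0 = 0
   encoded as L 0 = 0; values of L beyond n are irrelevant. *)
Definition level_seq (n k : nat) (L : nat -> nat) : Prop :=
  L O = O /\ forall i, (1 <= i <= n)%nat -> (L i <= k)%nat.

Definition pen (n : nat) (gamma : R) (x y : nat) : R :=
  Rmax (INR y - INR x) 0 * gamma * ln (INR n).

Definition p_exp (s lam : R) : R := lam * exp (- lam * s).

Definition score_exp (n : nat) (L : nat -> nat) (S : nat -> R)
  (alpha beta gamma : R) : R :=
  sum1 n (fun i => - ln (p_exp (S i) (beta * alpha ^ (L i)))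
                   + pen n gamma (L (i - 1)%nat) (L i)).

Definition opt_Exp_ab (n k : nat) (S : nat -> R) (alpha beta gamma : R)
  (L : nat -> nat) : Prop :=
  level_seq n k L /\
  forall L', level_seq n k L' ->
    score_exp n L S alpha beta gamma <= score_exp n L' S alpha beta gamma.

Definition opt_Exp_a (n k : nat) (S : nat -> R) (alpha gamma : R)
  (L : nat -> nat) (beta : R) : Prop :=
  level_seq n k L /\ 0 < beta /\
  forall L' beta', level_seq n k L' -> 0 < beta' ->
    score_exp n L S alpha beta gamma <= score_exp n L' S alpha beta' gamma.

(** For a fixed level sequence the score is [b A(L) - n ln b + C(L)] with
    [A(L) = sum_i s_i alpha^l_i], so the best rate is [n / A(L)]; hence
    [beta' = n / A(L)] and [betastar = n / A(Lstar)].  Comparing [L] with [Lstar]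
    at rate [beta], and [(Lstar, betastar)] with [(L, betastar)], gives the
    exchange inequality [(beta - betastar) (A(L) - A(Lstar)) <= 0].  Since
    [beta' - betastar] has the sign of [A(Lstar) - A(L)], the rates [beta] and
    [beta'] lie on the same side of [betastar]. *)

From Stdlib Require Import Reals Lra Lia.
Open Scope R_scope.

Lemma sum1_ext n f g : (forall i, f i = g i) -> sum1 n f = sum1 n g.
Proof. intros H; induction n; simpl; [lra | rewrite IHn, H; lra]. Qed.

Lemma sum1_add n f g : sum1 n (fun i => f i + g i) = sum1 n f + sum1 n g.
Proof. induction n; simpl; [lra | rewrite IHn; lra]. Qed.

Lemma sum1_scal_l n c f : sum1 n (fun i => c * f i) = c * sum1 n f.
Proof. induction n; simpl; [lra | rewrite IHn; lra]. Qed.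

Lemma sum1_const n c : sum1 n (fun _ => c) = INR n * c.
Proof. induction n; cbn [sum1]; [simpl; lra |]. rewrite IHn, S_INR. lra. Qed.

Lemma sum1_pos n f :
  (1 <= n)%nat -> (forall i, (1 <= i <= n)%nat -> 0 < f i) -> 0 < sum1 n f.
Proof.
  induction n as [| n IHn]; intros Hn Hf; [lia |]. simpl.
  assert (0 < f (S n)) by (apply Hf; lia).
  destruct n as [| n]; [simpl; lra |].
  assert (0 < sum1 (S n) f) by (apply IHn; [lia | intros; apply Hf; lia]).
  lra.
Qed.

Lemma sub_ln_le_1_eq t : 0 < t -> t - ln t <= 1 -> t = 1.
Proof.
  intros Ht Hle. destruct (Req_dec (ln t) 0) as [Hln | Hln].
  - now rewrite <- (exp_ln t Ht), Hln, exp_0.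
  - pose proof (exp_ineq1 _ Hln) as Hexp. rewrite exp_ln in Hexp by lra. lra.
Qed.

(* The map [b |-> b a - m ln b] attains its minimum [m - m ln (m / a)] only at
   [b = m / a]. *)
Lemma rate_argmin a m b : 0 < a -> 0 < m -> 0 < b ->
  b * a - m * ln b <= m - m * ln (m / a) -> b * a = m.
Proof.
  intros Ha Hm Hb Hle.
  set (t := b * a / m).
  assert (Ht : 0 < t) by (unfold t; apply Rdiv_lt_0_compat; [nra | lra]).
  assert (Hma : 0 < m / a) by (apply Rdiv_lt_0_compat; lra).
  assert (Hbt : b = t * (m / a)) by (unfold t; field; lra).
  rewrite Hbt, ln_mult in Hle by assumption.
  replace (t * (m / a) * a) with (m * t) in Hle by (field; lra).
  assert (Ht1 : t = 1).
  { apply sub_ln_le_1_eq; [exact Ht |].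
    apply (Rmult_le_reg_l m); lra. }
  unfold t in Ht1. apply (Rmult_eq_compat_r m) in Ht1.
  field_simplify in Ht1; lra.
Qed.

Lemma same_side_Rmin_Rmax x y z :
  0 <= (x - z) * (y - z) -> z <= Rmin x y \/ Rmax x y <= z.
Proof.
  intros H.
  destruct (Rle_dec z (Rmin x y)) as [Hmin | Hmin]; [now left |].
  destruct (Rle_dec (Rmax x y) z) as [Hmax | Hmax]; [now right |].
  exfalso. unfold Rmin, Rmax in *. destruct (Rle_dec x y); nra.
Qed.

Section ExpScore.

Variables (n k : nat) (S : nat -> R) (alpha gamma : R).
Hypothesis n_ge1 : (1 <= n)%nat.
Hypothesis S_pos : forall i, (1 <= i <= n)%nat -> 0 < S i.
Hypothesis alpha_pos : 0 < alpha.

Definition scaled_load (L : nat -> nat) : R :=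
  sum1 n (fun i => S i * alpha ^ L i).

Definition level_cost (L : nat -> nat) : R :=
  sum1 n (fun i => - ln (alpha ^ L i) + pen n gamma (L (i - 1)%nat) (L i)).

Lemma scaled_load_pos L : 0 < scaled_load L.
Proof.
  apply sum1_pos; [exact n_ge1 |]. intros i Hi.
  apply Rmult_lt_0_compat; [now apply S_pos | now apply pow_lt].
Qed.

Lemma score_exp_split L b : 0 < b ->
  score_exp n L S alpha b gamma
  = b * scaled_load L - INR n * ln b + level_cost L.
Proof.
  intros Hb. unfold score_exp, scaled_load, level_cost.
  rewrite (sum1_ext n _ (fun i => b * (S i * alpha ^ L i) + - ln b
    + (- ln (alpha ^ L i) + pen n gamma (L (i - 1)%nat) (L i)))).
  - rewrite !sum1_add, sum1_scal_l, sum1_const. ring.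
  - intros i. unfold p_exp.
    assert (0 < alpha ^ L i) by now apply pow_lt.
    rewrite ln_mult, ln_mult, ln_exp by (try apply Rmult_lt_0_compat; try apply exp_pos; lra).
    ring.
Qed.

Lemma opt_Exp_a_rate Lstar betastar :
  opt_Exp_a n k S alpha gamma Lstar betastar ->
  betastar * scaled_load Lstar = INR n.
Proof.
  intros [Hlev [Hbs Hopt]].
  pose proof (scaled_load_pos Lstar) as Ha.
  assert (Hn : 0 < INR n) by (apply lt_0_INR; lia).
  assert (Hq : 0 < INR n / scaled_load Lstar) by (apply Rdiv_lt_0_compat; lra).
  pose proof (Hopt Lstar _ Hlev Hq) as Hle.
  rewrite !score_exp_split in Hle by lra.
  apply rate_argmin; [exact Ha | exact Hn | exact Hbs |].
  replace (INR n / scaled_load Lstar * scaled_load Lstar) with (INR n) in Hle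
    by (field; lra).
  lra.
Qed.

Lemma opt_Exp_exchange L beta Lstar betastar : 0 < beta ->
  opt_Exp_ab n k S alpha beta gamma L ->
  opt_Exp_a n k S alpha gamma Lstar betastar ->
  (beta - betastar) * (scaled_load L - scaled_load Lstar) <= 0.
Proof.
  intros Hb [HL HoptL] [HLs [Hbs HoptLs]].
  pose proof (HoptL Lstar HLs) as HL_at_beta.
  pose proof (HoptLs L betastar HL Hbs) as HLs_at_betastar.
  rewrite !score_exp_split in HL_at_beta, HLs_at_betastar by lra.
  lra.
Qed.

End ExpScore.

Theorem proposition10 (n k : nat) (S : nat -> R) (alpha beta gamma : R)
  (L : nat -> nat) (Lstar : nat -> nat) (betastar : R) :
  (1 <= n)%nat ->
  (forall i, (1 <= i <= n)%nat -> 0 < S i) ->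
  1 < alpha -> 0 < gamma -> (1 <= k)%nat -> 0 < beta ->
  opt_Exp_ab n k S alpha beta gamma L ->
  opt_Exp_a n k S alpha gamma Lstar betastar ->
  let beta' := INR n / sum1 n (fun i => S i * alpha ^ (L i)) in
  betastar <= Rmin beta beta' \/ Rmax beta beta' <= betastar.
Proof.
  intros Hn HS Halpha _ _ Hb HoptL HoptLs beta'.
  assert (Ha : 0 < alpha) by lra.
  pose proof (opt_Exp_a_rate n k S alpha gamma Hn HS Ha _ _ HoptLs) as Hrate.
  pose proof (opt_Exp_exchange n k S alpha gamma Ha _ _ _ _ Hb HoptL HoptLs) as Hex.
  pose proof (scaled_load_pos n S alpha Hn HS Ha L) as HA.
  assert (Hbs : 0 < betastar) by (destruct HoptLs as [_ [Hbs _]]; exact Hbs).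
  set (A := scaled_load n S alpha L) in *.
  set (As := scaled_load n S alpha Lstar) in *.
  assert (Hb' : beta' - betastar = betastar * / A * (As - A)).
  { change (INR n / A - betastar = betastar * / A * (As - A)).
    rewrite <- Hrate. field. lra. }
  apply same_side_Rmin_Rmax. rewrite Hb'.
  replace ((beta - betastar) * (betastar * / A * (As - A)))
    with (betastar * / A * - ((beta - betastar) * (A - As))) by ring.
  apply Rmult_le_pos; [| lra].
  apply Rmult_le_pos; [lra | apply Rlt_le, Rinv_0_lt_compat; exact HA].
Qed.
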